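(* Let $\tilde\Phi_N=[\tilde A\ \tilde B]$ be the regularized least-squares estimate and $\hat\Phi_N=[\hat A\ \hat B]$ the sparsified estimate described in the context, and let $\tilde\Delta_N=\Phi-\tilde\Phi_N$, $\Delta_N=\Phi-\hat\Phi_N$ with $\Phi=[A\ B]$. If $\|\tilde\Delta_N\|\le\varepsilon$ for some $\varepsilon>0$, then $\|\Delta_N\|\le\sqrt{\psi}\,\varepsilon$, where $\psi$ is the number of strongly connected components of the directed graph $\mathcal{G}(\mathcal{V},\mathcal{A})$.
   Context: Let $\mathcal{V}=[p]$ with block dimensions $n_i,m_i$, $n=\sum n_i$, $m=\sum m_i$. $A\in\mathbb{R}^{n\times n}$, $B\in\mathbb{R}^{n\times m}$ have blocks $A_{ij}\in\mathbb{R}^{n_i\times n_j}$, $B_{ij}\in\mathbb{R}^{n_i\times m_j}$ with $A_{ij}=0$, $B_{ij}=0$ whenever $j\notin\mathcal{N}_i$ for given sets $\mathcal{N}_i\subseteq\mathcal{V}$. $\mathcal{G}(\mathcal{V},\mathcal{A})$ is a directed graph without self loops whose edges carry delays $0$ or $1$; $D_{ij}$ is the minimum total delay over directed paths from $j$ to $i$ ($D_{ii}=0$, $D_{ij}=+\infty$ if there is no such path). It is assumed that $D_{ij}\le1$ for all $j\in\mathcal{N}_i$. Given a trajectory $x_0,\dots,x_N\in\mathbb{R}^n$, $u_0,\dots,u_{N-1}\in\mathbb{R}^m$ of $x_{t+1}=Ax_t+Bu_t+w_t$ and $\lambda>0$, with $z_t=[x_t^\top,u_t^\top]^\top$, $\tilde\Phi_N=\arg\min_{Y\in\mathbb{R}^{n\times(n+m)}}\{\lambda\|Y\|_F^2+\sum_{t=0}^{N-1}\|x_{t+1}-Yz_t\|^2\}$.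 $\hat A,\hat B$ are obtained from $\tilde A,\tilde B$ by setting the blocks $\hat A_{ij}$, $\hat B_{ij}$ to zero exactly for those $(i,j)$ with $D_{ij}=\infty$ (other blocks unchanged). $\|\cdot\|$ is the spectral norm. *)

From mathcomp Require Import all_boot all_order all_algebra.
From mathcomp Require Import boolp classical_sets reals.
Set Implicit Arguments. Unset Strict Implicit. Unset Printing Implicit Defensive.
Import Order.TTheory GRing.Theory Num.Theory.
Local Open Scope ring_scope.

Definition normsq {R : realType} {k : nat} (v : 'cV[R]_k) : R :=
  \sum_(i < k) v i 0 ^+ 2.

Definition frobsq {R : realType} {a b : nat} (Y : 'M[R]_(a, b)) : R :=
  \sum_(i < a) \sum_(j < b) Y i j ^+ 2.

Definition specnorm {R : realType} {a b : nat} (M : 'M[R]_(a, b)) : R :=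
  sup [set y : R | exists v : 'cV[R]_b,
         normsq v <= 1 /\ y = Num.sqrt (normsq (M *m v))]%classic.

(* e j i : there is a directed edge j -> i ; dl j i : its delay *)
Definition walk_delay {p : nat} (dl : 'I_p -> 'I_p -> nat) (j : 'I_p)
  (s : seq 'I_p) : nat := sumn (pairmap dl j s).

Definition walk_from_to_delay {p : nat} (e : rel 'I_p)
  (dl : 'I_p -> 'I_p -> nat) (j i : 'I_p) (k : nat) : Prop :=
  exists s : seq 'I_p, [/\ path e j s, last j s = i & walk_delay dl j s = k].

(* D_ij <= k  (D_ij = minimal total delay over directed paths from j to i) *)
Definition D_le {p : nat} (e : rel 'I_p) (dl : 'I_p -> 'I_p -> nat)
  (i j : 'I_p) (k : nat) : Prop :=
  exists2 k', (k' <= k)%N & walk_from_to_delay e dl j i k'.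

Definition D_inf {p : nat} (e : rel 'I_p) (dl : 'I_p -> 'I_p -> nat)
  (i j : 'I_p) : Prop :=
  forall k, ~ walk_from_to_delay e dl j i k.

Definition num_scc {p : nat} (e : rel 'I_p) : nat :=
  #|[set [set j | connect e i j && connect e j i] | i : 'I_p]|.

Definition rls_cost {R : realType} {n m : nat} (lam : R) (N : nat)
  (x : nat -> 'cV[R]_n) (u : nat -> 'cV[R]_m) (Y : 'M[R]_(n, n + m)) : R :=
  lam * frobsq Y + \sum_(t < N) normsq (x t.+1 - Y *m col_mx (x t) (u t)).

Definition sparsify {R : realType} {p a b : nat} (e : rel 'I_p)
  (dl : 'I_p -> 'I_p -> nat) (br : 'I_a -> 'I_p) (bc : 'I_b -> 'I_p)
  (M : 'M[R]_(a, b)) : 'M[R]_(a, b) :=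
  \matrix_(r, c) (if `[< D_inf e dl (br r) (bc c) >] then 0 else M r c).

From mathcomp Require Import all_boot all_order all_algebra.
From mathcomp Require Import boolp classical_sets reals.
Import Order.TTheory GRing.Theory Num.Theory.
Local Open Scope ring_scope.

(* Where D_ij = oo the block Phi_ij vanishes (neighbours have D_ij <= 1), so
   there Delta_N is zero; elsewhere it agrees with tDelta_N.  Thus a row of
   Delta_N in block i is the row of tDelta_N with the columns of the blocks
   that cannot reach i masked out.  Reachability of i only depends on the
   strongly connected component S of i, so the rows of S in Delta_N v are rows
   of tDelta_N w_S for one masked copy w_S of v.  Summing
   |tDelta_N w_S|^2 <= eps^2 over the psi components gives
   |Delta_N v|^2 <= psi eps^2. *)

Section SpectralNorm.

Context {R : realType}.

Lemma normsq_ge0 k (v : 'cV[R]_k) : 0 <= normsq v.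
Proof. by apply: sumr_ge0 => i _; rewrite sqr_ge0. Qed.

Lemma normsq0 k : normsq (0 : 'cV[R]_k) = 0.
Proof. by rewrite /normsq big1 // => i _; rewrite mxE expr0n. Qed.

Lemma normsq_entry_le1 k (v : 'cV[R]_k) j : normsq v <= 1 -> `|v j 0| <= 1.
Proof.
move=> v_le1; rewrite -(expr_le1 (n := 2)) // -normrX ger0_norm ?sqr_ge0 //.
apply: le_trans v_le1; rewrite /normsq (bigD1 j) //= lerDl.
by apply: sumr_ge0 => i _; rewrite sqr_ge0.
Qed.

Lemma specnorm_ub {a b} (M : 'M[R]_(a, b)) {v} :
  normsq v <= 1 -> Num.sqrt (normsq (M *m v)) <= specnorm M.
Proof.
move=> v_le1; apply: sup_upper_bound; last by exists v.
split; first by exists (Num.sqrt (normsq (M *m 0))), 0; rewrite normsq0 ler01.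
exists (Num.sqrt (\sum_(i < a) (\sum_(j < b) `|M i j|) ^+ 2)).
move=> _ [w [w_le1 ->]]; rewrite ler_sqrt; last first.
  by apply: sumr_ge0 => i _; rewrite sqr_ge0.
apply: ler_sum => i _; rewrite mxE -real_normK ?num_real //.
apply: lerXn2r; rewrite ?nnegrE ?sumr_ge0 //.
apply: le_trans (ler_norm_sum _ _ _) _; apply: ler_sum => j _.
by rewrite normrM -[leRHS]mulr1 ler_wpM2l ?normsq_entry_le1.
Qed.

Lemma normsq_mulmx_le {a b} (M : 'M[R]_(a, b)) c v :
  specnorm M <= c -> normsq v <= 1 -> normsq (M *m v) <= c ^+ 2.
Proof.
move=> M_le_c v_le1; have Mv_le_c := le_trans (specnorm_ub M v_le1) M_le_c.
rewrite -[normsq _]sqr_sqrtr ?normsq_ge0 // ler_sqr ?nnegrE ?sqrtr_ge0 //.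
exact: le_trans (sqrtr_ge0 _) Mv_le_c.
Qed.

Lemma specnorm_le {a b} (M : 'M[R]_(a, b)) c : 0 <= c ->
  (forall v, normsq v <= 1 -> normsq (M *m v) <= c ^+ 2) -> specnorm M <= c.
Proof.
move=> c_ge0 Mc; apply: ge_sup.
  by exists (Num.sqrt (normsq (M *m 0))), 0; rewrite normsq0 ler01.
move=> _ [v [v_le1 ->]].
by rewrite -(ger0_norm c_ge0) -sqrtr_sqr ler_sqrt ?sqr_ge0 ?Mc.
Qed.

Lemma normsq_mulmx_mask {a b} (X D : 'M[R]_(a, b)) (T : finType) (C : {set T})
    (f : 'I_a -> T) (mask : T -> pred 'I_b) (c : R) :
  (forall r j, D r j = if mask (f r) j then X r j else 0) ->
  (forall r, f r \in C) ->
  (forall w, normsq w <= 1 -> normsq (X *m w) <= c) ->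
  forall v, normsq v <= 1 -> normsq (D *m v) <= #|C|%:R * c.
Proof.
move=> DE fC Xc v v_le1.
rewrite /normsq (partition_big f (mem C)) //= mulr_natl -sumr_const.
apply: ler_sum => S _; pose w : 'cV[R]_b := \col_j (if mask S j then v j 0 else 0).
have w_le1 : normsq w <= 1.
  apply: le_trans v_le1; apply: ler_sum => j _; rewrite mxE.
  by case: ifP; rewrite ?expr0n ?sqr_ge0.
have rowE r : f r = S -> (D *m v) r 0 = (X *m w) r 0.
  move=> frS; rewrite !mxE; apply: eq_bigr => j _.
  by rewrite DE frS mxE; case: ifP; rewrite ?mul0r ?mulr0.
apply: le_trans (Xc w w_le1); rewrite [leRHS](bigID (fun r => f r == S)) /=.
apply: ler_wpDr; first by apply: sumr_ge0 => r _; rewrite sqr_ge0.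
by apply: ler_sum => r /eqP/rowE ->.
Qed.

End SpectralNorm.

Section DelayGraph.

Variables (p : nat) (e : rel 'I_p) (dl : 'I_p -> 'I_p -> nat).

Definition scc (i : 'I_p) : {set 'I_p} := [set j | connect e i j && connect e j i].

Lemma num_sccE : num_scc e = #|[set scc i | i : 'I_p]|.
Proof. by []. Qed.

Lemma connect_scc j i : connect e j i = [exists k in scc i, connect e j k].
Proof.
apply/idP/existsP => [ji | [k /andP[]]]; first by exists i; rewrite inE !connect0.
by rewrite inE => /andP[_ ki] jk; apply: connect_trans jk ki.
Qed.

Lemma D_infE i j : `[< D_inf e dl i j >] = ~~ connect e j i.
Proof.
apply/asboolP/negP => [Dij /connectP[s es si] | ji k [s [es si _]]].
  by apply: (Dij (walk_delay dl j s)); exists s; rewrite -si.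
by apply: ji; apply/connectP; exists s.
Qed.

Lemma D_le_connect i j k : D_le e dl i j k -> connect e j i.
Proof. by case=> _ _ [s [es <- _]]; apply/connectP; exists s. Qed.

Variables (R : realType) (a b : nat) (br : 'I_a -> 'I_p) (bc : 'I_b -> 'I_p).

Lemma sparsifyE (M : 'M[R]_(a, b)) r c :
  sparsify e dl br bc M r c = if connect e (bc c) (br r) then M r c else 0.
Proof. by rewrite mxE D_infE if_neg. Qed.

Lemma sub_sparsifyE (M M' : 'M[R]_(a, b)) :
  (forall r c, ~~ connect e (bc c) (br r) -> M r c = 0) ->
  forall r c, (M - sparsify e dl br bc M') r c =
              if connect e (bc c) (br r) then (M - M') r c else 0.
Proof.
move=> M0 r c; rewrite [LHS]mxE [in LHS]mxE sparsifyE.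
by case: ifPn => [_ | /M0 ->]; rewrite ?mxE ?subrr.
Qed.

End DelayGraph.

Arguments scc {p} e i.

Definition col_block {p n m : nat} (bx : 'I_n -> 'I_p) (bu : 'I_m -> 'I_p)
    (c : 'I_(n + m)) : 'I_p :=
  match split c with inl j => bx j | inr j => bu j end.

Lemma row_mx_sparsify {R : realType} {p a n m : nat} (e : rel 'I_p) dl
    (br : 'I_a -> 'I_p) (bx : 'I_n -> 'I_p) (bu : 'I_m -> 'I_p)
    (M1 : 'M[R]_(a, n)) (M2 : 'M[R]_(a, m)) :
  row_mx (sparsify e dl br bx M1) (sparsify e dl br bu M2)
  = sparsify e dl br (col_block bx bu) (row_mx M1 M2).
Proof.
by apply/matrixP => r c; rewrite !mxE /col_block; case: split => j; rewrite mxE.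
Qed.

Theorem lemma5 (R : realType) (p n m : nat)
  (blkx : 'I_n -> 'I_p) (blku : 'I_m -> 'I_p)
  (hblkx : forall a b : 'I_n, (a <= b)%N -> (blkx a <= blkx b)%N)
  (hblku : forall a b : 'I_m, (a <= b)%N -> (blku a <= blku b)%N)
  (Nb : 'I_p -> {set 'I_p})
  (A : 'M[R]_(n, n)) (B : 'M[R]_(n, m))
  (hA : forall r c, blkx c \notin Nb (blkx r) -> A r c = 0)
  (hB : forall r c, blku c \notin Nb (blkx r) -> B r c = 0)
  (e : rel 'I_p) (dl : 'I_p -> 'I_p -> nat)
  (he_noloop : forall i, ~~ e i i)
  (hdl : forall j i, e j i -> (dl j i <= 1)%N)
  (hD : forall i j, j \in Nb i -> D_le e dl i j 1)
  (N : nat) (x : nat -> 'cV[R]_n) (u : nat -> 'cV[R]_m) (w : nat -> 'cV[R]_n)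
  (hsys : forall t, (t < N)%N -> x t.+1 = A *m x t + B *m u t + w t)
  (lam : R) (hlam : 0 < lam)
  (tPhi : 'M[R]_(n, n + m))
  (htPhi : forall Y : 'M[R]_(n, n + m),
      rls_cost lam N x u tPhi <= rls_cost lam N x u Y)
  (eps : R) (heps : 0 < eps)
  (hdelta : specnorm (row_mx A B - tPhi) <= eps) :
  specnorm (row_mx A B
            - row_mx (sparsify e dl blkx blkx (lsubmx tPhi))
                     (sparsify e dl blkx blku (rsubmx tPhi)))
    <= Num.sqrt ((num_scc e)%:R) * eps.
Proof.
rewrite row_mx_sparsify hsubmxK; set K := col_block blkx blku.
have Phi_support r c : ~~ connect e (K c) (blkx r) -> row_mx A B r c = 0.
  apply: contraNeq; rewrite mxE /K /col_block; case: split => j Phi_rj.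
    by apply: D_le_connect (hD _ _ _); apply: contraNT Phi_rj => /hA ->.
  by apply: D_le_connect (hD _ _ _); apply: contraNT Phi_rj => /hB ->.
apply: specnorm_le => [|v v_le1]; first by rewrite mulr_ge0 ?sqrtr_ge0 ?ltW.
rewrite exprMn sqr_sqrtr // num_sccE.
apply: (normsq_mulmx_mask (row_mx A B - tPhi) _ _ _ (scc e \o blkx)
          (fun S c => [exists k in S, connect e (K c) k])) => //.
- by move=> r c; rewrite sub_sparsifyE // connect_scc.
- by move=> r; apply: imset_f.
- by move=> z; apply: normsq_mulmx_le.
Qed.
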